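(* Let $n$ be a positive multiple of $4$, $|\mathrm{GHZ}\rangle=\frac1{\sqrt2}(|0\rangle^{\otimes n}+|1\rangle^{\otimes n})$ and $\rho_{\mathrm{GHZ}}=|\mathrm{GHZ}\rangle\langle\mathrm{GHZ}|$. Then for $\alpha\in\{0,\dots,2n\}$: $\mathcal{P}_\alpha(\rho_{\mathrm{GHZ}})=0$ if $\alpha$ is odd or $\alpha\equiv 2\pmod 4$; $\mathcal{P}_\alpha(\rho_{\mathrm{GHZ}})=\binom{n}{\alpha/2}/2^n$ if $\alpha\equiv 0\pmod 4$ and $\alpha\neq n$; and $\mathcal{P}_n(\rho_{\mathrm{GHZ}})=\frac{2^{n-1}+\binom{n}{n/2}}{2^n}$.
   Context: On $\mathcal{H}=(\mathbb{C}^2)^{\otimes n}$ define the Majorana operators $c_{2j-1}=Z^{\otimes(j-1)}\otimes X\otimes\mathbb{1}^{\otimes(n-j)}$ and $c_{2j}=Z^{\otimes(j-1)}\otimes Y\otimes\mathbb{1}^{\otimes(n-j)}$ for $j=1,\dots,n$. For $\alpha=0,\dots,2n$, $\mathcal{L}_\alpha\subseteq\mathcal{L}(\mathcal{H})$ is the span of the products $c_{i_1}\cdots c_{i_\alpha}$ with $1\le i_1<\dots<i_\alpha\le 2n$. The orthonormal basis used consists of the Hermitian Pauli strings (up to sign) in $\mathcal{L}_\alpha$ divided by $\sqrt{2^n}$, and $\mathcal{P}_\alpha(\rho)=\sum_\mu\mathrm{Tr}[B^\mu\rho]^2$ over this basis. *)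

From mathcomp Require Import all_boot all_order all_algebra all_field.
Set Implicit Arguments. Unset Strict Implicit. Unset Printing Implicit Defensive.
Import Order.TTheory GRing.Theory Num.Theory.
Local Open Scope ring_scope.

(* Single-qubit Pauli matrices, basis |0> = false, |1> = true. *)
Inductive pauli := PI | PX | PY | PZ.

Definition pmat (p : pauli) (b b' : bool) : algC :=
  match p with
  | PI => if b == b' then 1 else 0
  | PX => if b == b' then 0 else 1
  | PY => if b == b' then 0 else if b' then - 'i else 'i
  | PZ => if b == b' then (if b then -1 else 1) else 0
  end.

(* Computational basis index i < 2^n ; qubit j (0-based, j = 0 is the first,
   i.e. leftmost tensor factor) is the bit of weight 2^(n-1-j). *)
Definition qbit (n : nat) (i : 'I_(2 ^ n)) (j : 'I_n) : bool :=
  ssrnat.odd (i %/ 2 ^ (n.-1 - j))%N.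

Definition pstring (n : nat) (f : 'I_n -> pauli) : 'M[algC]_(2 ^ n) :=
  \matrix_(i, i') \prod_(j < n) pmat (f j) (qbit i j) (qbit i' j).

(* Majorana operators, 0-based: k = 2(j-1) is c_{2j-1} = Z..Z X 1..1,
   k = 2(j-1)+1 is c_{2j} = Z..Z Y 1..1 (j-1 factors Z). *)
Definition majorana (n : nat) (k : 'I_(2 * n)) : 'M[algC]_(2 ^ n) :=
  pstring (fun j : 'I_n =>
    if (j < k %/ 2)%N then PZ
    else if (j == k %/ 2 :> nat)%N then (if ssrnat.odd k then PY else PX)
    else PI).

(* Ordered product c_{i1} ... c_{ia} over i1 < ... < ia in S. *)
Definition majprod (n : nat) (S : {set 'I_(2 * n)}) : 'M[algC]_(2 ^ n) :=
  foldr (fun A B => A *m B) (1%:M : 'M[algC]_(2 ^ n))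
        [seq majorana k | k <- enum S].

Definition adjmx (m p : nat) (A : 'M[algC]_(m, p)) : 'M[algC]_(p, m) :=
  (map_mx (fun x : algC => x^*) A)^T.

(* The Hermitian Pauli string (up to sign) proportional to M, for M a
   Pauli string times a phase in {±1, ±i}. *)
Definition hermPart (N : nat) (M : 'M[algC]_N) : 'M[algC]_N :=
  if adjmx M == M then M else 'i *: M.

(* Orthonormal basis element of L_alpha attached to S. *)
Definition majBasis (n : nat) (S : {set 'I_(2 * n)}) : 'M[algC]_(2 ^ n) :=
  (sqrtC (2 ^ n)%:R)^-1 *: hermPart (majprod S).

Definition Pweight (n alpha : nat) (rho : 'M[algC]_(2 ^ n)) : algC :=
  \sum_(S : {set 'I_(2 * n)} | #|S| == alpha) (\tr (majBasis S *m rho)) ^+ 2.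

Definition ghz (n : nat) : 'cV[algC]_(2 ^ n) :=
  \col_(i < 2 ^ n)
    (if ((i : nat) == 0%N) || ((i : nat) == (2 ^ n).-1) then (sqrtC 2)^-1 else 0).

Definition rhoGHZ (n : nat) : 'M[algC]_(2 ^ n) := ghz n *m adjmx (ghz n).

From mathcomp Require Import all_boot all_order all_algebra all_field zify ring.
Set Implicit Arguments. Unset Strict Implicit. Unset Printing Implicit Defensive.
Import Order.TTheory GRing.Theory Num.Theory.
Local Open Scope ring_scope.

(** Under the Jordan-Wigner encoding the Majorana product c_S is the tensor
    product over the sites j of X^(x_j) Y^(y_j) Z^(z_j), where x_j, y_j record
    whether c_(2j-1), c_(2j) lie in S and z_j is the parity of the part of S at
    later sites.  Tracing against rho_GHZ keeps only the four corner entries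
    <a|c_S|b> with a, b in {0...0, 1...1}, and these all vanish unless S is
    paired (every site carries both or neither of X, Y, so |S| = 2t for t
    occupied sites) or antipaired (every site carries exactly one of them, so
    |S| = n).  In both cases the squared trace is ((-1)^t + 1)/2, with t the
    number of Y's; for an antipaired S this uses that the parities z_j multiply
    to (-1)^(n(n-1)/2) = 1 when 4 | n.  A non-Hermitian c_S is paired with t
    odd, so its trace vanishes and the factor i in its Hermitian part is
    harmless.  Counting even t gives binom(n, alpha/2) [4 | alpha] for paired
    sets and 2^(n-1) [alpha = n] for antipaired ones. *)

(** * Tensor products of one-qubit matrices *)

Lemma eq_binary_digits m a b : (a < 2 ^ m)%N -> (b < 2 ^ m)%N ->
  (forall e, (e < m)%N -> odd (a %/ 2 ^ e) = odd (b %/ 2 ^ e)) -> a = b.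
Proof.
elim: m a b => [|m IH] a b ha hb h.
  by move: ha hb; rewrite expn0 !ltnS !leqn0 => /eqP-> /eqP->.
have h0 := h 0%N (ltn0Sn m); rewrite !expn0 !divn1 in h0.
rewrite (divn_eq a 2) (divn_eq b 2) !modn2 h0.
congr (_ * 2 + _)%N; apply: IH.
- by rewrite ltn_divLR // -expnSr.
- by rewrite ltn_divLR // -expnSr.
- by move=> e he; rewrite -!divnMA -expnS; apply: h.
Qed.

Definition qbits n (i : 'I_(2 ^ n)) : {ffun 'I_n -> bool} := [ffun j => qbit i j].

Lemma qbits_inj n : injective (@qbits n).
Proof.
move=> i i' /ffunP h; apply/val_inj/(eq_binary_digits (ltn_ord i) (ltn_ord i')).
move=> e he; have hj : (n.-1 - e < n)%N by lia.
have := h (Ordinal hj); rewrite !ffunE /qbit /=.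
by have -> : (n.-1 - (n.-1 - e) = e)%N by lia.
Qed.

Lemma qbits_bij n : bijective (@qbits n).
Proof.
by apply: (inj_card_bij (@qbits_inj n)); rewrite card_ffun card_bool !card_ord.
Qed.

Definition obit (b : bool) : 'I_2 := if b then ord_max else ord0.

Lemma obit_inj : injective obit. Proof. by case; case. Qed.

Lemma ord2_obit (a : 'I_2) : a = obit (val a == 1%N).
Proof. by apply/val_inj; case: a => [[|[|]]]. Qed.

Lemma sum_ord2 (f : 'I_2 -> algC) : \sum_(k < 2) f k = f (obit false) + f (obit true).
Proof. by rewrite !big_ord_recl big_ord0 addr0 /obit; congr (_ + f _); apply/val_inj. Qed.

Section Tensor.

Variable n : nat.
Implicit Types F G : 'I_n -> 'M[algC]_2.

Definition tensmx F : 'M[algC]_(2 ^ n) :=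
  \matrix_(i, i') \prod_(j < n) F j (obit (qbit i j)) (obit (qbit i' j)).

Lemma eq_tensmx F G : (forall j, F j = G j) -> tensmx F = tensmx G.
Proof. by move=> FG; apply/matrixP=> i i'; rewrite !mxE; apply: eq_bigr => j _; rewrite FG. Qed.

Lemma tensmx_bits F i i' b b' :
  (forall j, qbit i j = b) -> (forall j, qbit i' j = b') ->
  tensmx F i i' = \prod_j F j (obit b) (obit b').
Proof. by move=> hi hi'; rewrite mxE; apply: eq_bigr => j _; rewrite hi hi'. Qed.

(* Matrix product is a sum over basis states, i.e. over bit vectors, which
   distributes over the site-wise product. *)
Lemma tensmxM F G : tensmx F *m tensmx G = tensmx (fun j => F j *m G j).
Proof.
apply/matrixP=> i i'; rewrite !mxE.
under eq_bigr do rewrite !mxE -big_split /=.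
have [h hK Kh] := qbits_bij n.
rewrite (reindex h) /=; last by apply: onW_bij; exists (@qbits n).
have qbit_h f j : qbit (h f) j = f j by rewrite -[in RHS](Kh f) ffunE.
under eq_bigr do under eq_bigr do rewrite !qbit_h.
rewrite -(bigA_distr_bigA (fun j c =>
  F j (obit (qbit i j)) (obit c) * G j (obit c) (obit (qbit i' j)))) /=.
by apply: eq_bigr => j _; rewrite mxE sum_ord2 big_bool /= addrC.
Qed.

Lemma tensmx1 : tensmx (fun => 1%:M) = 1%:M.
Proof.
apply/matrixP=> i i'; rewrite !mxE.
have [->|ne] := eqVneq i i'; first by rewrite big1 // => j _; rewrite mxE eqxx.
have : ~~ [forall j, qbit i j == qbit i' j].
  apply: contra ne => /forallP h; apply/eqP/qbits_inj/ffunP => j.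
  by rewrite !ffunE; apply/eqP.
rewrite negb_forall => /existsP [j hj].
by rewrite (bigD1 j) //= mxE (inj_eq obit_inj) (negbTE hj) mul0r.
Qed.

Lemma adjmx_tensmx F (s : 'I_n -> algC) :
  (forall j, adjmx (F j) = s j *: F j) -> adjmx (tensmx F) = (\prod_j s j) *: tensmx F.
Proof.
move=> adjF; apply/matrixP => i i'; rewrite !mxE rmorph_prod -big_split /=.
apply: eq_bigr => j _.
by move/matrixP/(_ (obit (qbit i j)) (obit (qbit i' j))): (adjF j); rewrite !mxE.
Qed.

End Tensor.

(** * Site matrices *)

Definition pauli_mx (p : pauli) : 'M[algC]_2 :=
  \matrix_(a, b) pmat p (val a == 1%N) (val b == 1%N).

Lemma pauli_mx_obit p b b' : pauli_mx p (obit b) (obit b') = pmat p b b'.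
Proof. by rewrite mxE; case: b; case: b'. Qed.

Ltac mx2_entries := apply/matrixP;
  let a := fresh "a" in let b := fresh "b" in move=> a b;
  rewrite (ord2_obit a) (ord2_obit b); case: (val a == 1%N); case: (val b == 1%N);
  rewrite -?mulmxE !mxE ?sum_ord2 ?mxE ?sum_ord2 ?mxE ?pauli_mx_obit /=.

Lemma pauli_mxI : pauli_mx PI = 1.
Proof. by mx2_entries. Qed.

Definition zmx (b : bool) : 'M[algC]_2 := if b then pauli_mx PZ else 1.

Lemma zmxD a b : zmx (a (+) b) = zmx a * zmx b.
Proof.
have ZZ : pauli_mx PZ * pauli_mx PZ = 1 by mx2_entries; ring.
by case: a; case: b; rewrite /zmx /= ?mul1r ?mulr1.
Qed.

Definition site_mx (x y z : bool) : 'M[algC]_2 :=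
  (if x then pauli_mx PX else 1) * (if y then pauli_mx PY else 1) * zmx z.

Definition bsign (b : bool) : algC := if b then -1 else 1.

(* Each block of four consecutive factors is 1 * -1 * 1 * -1. *)
Lemma prod_tail_sign m : (4 %| m)%N -> \prod_(j < m) bsign (odd (m - j.+1)) = 1.
Proof.
move=> /dvdnP[{}m ->].
have := big_rev_mkord (@GRing.mul algC) 1 0 (m * 4) xpredT (fun k => bsign (odd k)).
rewrite subn0 /= => <-.
elim: m => [|m IH]; first by rewrite big_geq.
rewrite (_ : (m.+1 * 4 = (m * 4).+4)%N); last by lia.
by rewrite !big_nat_recr //= IH oddM andbF /bsign /=; ring.
Qed.

Lemma site_mx_obit x y z b b' : site_mx x y z (obit b) (obit b') =
  ((b (+) b') == (x (+) y))%:R *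
  (if y then (if (if x then b else b') then - 'i else 'i) else 1) * bsign (z && b').
Proof.
rewrite /site_mx /zmx /bsign.
by case: x; case: y; case: z; case: b; case: b';
  rewrite ?mul1r ?mulr1 -?mulmxE !mxE ?sum_ord2 ?mxE ?sum_ord2 ?mxE ?pauli_mx_obit /=;
  rewrite ?sum_ord2 ?mxE ?pauli_mx_obit /=; ring.
Qed.

Lemma site_mx_obit_eq0 x y z b b' :
  (b (+) b') != (x (+) y) -> site_mx x y z (obit b) (obit b') = 0.
Proof. by move=> /negbTE ne; rewrite site_mx_obit ne !mul0r. Qed.

(* Taking adjoints reverses X^x Y^y Z^z; restoring the order costs a sign for
   Y X = - X Y and one for moving a single X or Y past Z. *)
Definition site_sign (x y z : bool) : algC := bsign ((x && y) || ((x != y) && z)).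

Lemma adjmx_site_mx x y z : adjmx (site_mx x y z) = site_sign x y z *: site_mx x y z.
Proof.
have adjmxE (A : 'M[algC]_2) i j : adjmx A i j = (A j i)^* by rewrite !mxE.
apply/matrixP => a b; rewrite (ord2_obit a) (ord2_obit b) adjmxE [RHS]mxE.
case: (val a == 1%N); case: (val b == 1%N); rewrite !site_mx_obit /site_sign /bsign;
  case: x; case: y; case: z;
  rewrite /= ?rmorphM ?rmorphN ?rmorph1 ?rmorph0 ?conjCi ?opprK; try ring.
all: rewrite [_ 'i]conjCi; ring.
Qed.

(** * Majorana products as tensor products *)

Lemma big_nat_pairs (R : Type) (idx : R) (op : Monoid.law idx) m (G : nat -> R) :
  \big[op/idx]_(0 <= k < 2 * m) G k = \big[op/idx]_(0 <= j < m) op (G (2 * j)%N) (G (2 * j).+1).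
Proof.
elim: m => [|m IH]; first by rewrite !big_geq.
rewrite (_ : (2 * m.+1 = (2 * m).+2)%N); last by lia.
by rewrite !big_nat_recr //= IH Monoid.mulmA.
Qed.

Lemma half_double j : ((2 * j) %/ 2 = j)%N. Proof. by rewrite mulKn. Qed.
Lemma half_doubleS j : ((2 * j).+1 %/ 2 = j)%N.
Proof. by rewrite -addn1 (mulnC 2 j) divnMDl // addn0. Qed.
Lemma odd_double j : odd (2 * j) = false. Proof. by rewrite oddM. Qed.
Lemma odd_doubleS j : odd (2 * j).+1 = true. Proof. by rewrite oddS odd_double. Qed.

Section JordanWigner.

Variable n : nat.
Implicit Types S : {set 'I_(2 * n)}.

Definition majorana_site (k : nat) (j : 'I_n) : pauli :=
  if (j < k %/ 2)%N then PZ
  else if (j == k %/ 2 :> nat)%N then (if odd k then PY else PX)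
  else PI.

Lemma majorana_tensmx (k : 'I_(2 * n)) :
  majorana k = tensmx (fun j => pauli_mx (majorana_site k j)).
Proof. by apply/matrixP=> i i'; rewrite !mxE; apply: eq_bigr => j _; rewrite pauli_mx_obit. Qed.

Lemma majprod_site S :
  majprod S = tensmx (fun j => \prod_(k <- enum S) pauli_mx (majorana_site k j)).
Proof.
rewrite /majprod; elim: (enum S) => [|k s IH] /=.
  by rewrite -tensmx1; apply: eq_tensmx => j; rewrite big_nil.
by rewrite IH majorana_tensmx tensmxM; apply: eq_tensmx => j; rewrite big_cons mulmxE.
Qed.

Definition in_val S (k : nat) : bool := [exists x in S, val x == k].

Lemma in_valE S (x : 'I_(2 * n)) : in_val S x = (x \in S).
Proof.
apply/existsP/idP => [[y /andP[yS /eqP/val_inj <-]] //|xS].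
by exists x; rewrite xS eqxx.
Qed.

Definition xbit S (j : nat) : bool := in_val S (2 * j).
Definition ybit S (j : nat) : bool := in_val S (2 * j).+1.
Definition zbit S (j : nat) : bool :=
  \big[addb/false]_(j.+1 <= j' < n) (xbit S j' (+) ybit S j').

Lemma big_enum_set (R : Type) (idx : R) (op : Monoid.law idx) S (F : nat -> R) :
  \big[op/idx]_(k <- enum S) F (val k) =
  \big[op/idx]_(0 <= k < 2 * n) (if in_val S k then F k else idx).
Proof.
rewrite /enum_mem -enumT big_filter.
rewrite (eq_bigl (fun k : 'I_(2 * n) => in_val S k)); last by move=> k; rewrite in_valE.
rewrite -(big_map val (in_val S) F) val_enum_ord.
by rewrite /index_iota subn0 big_mkcond.
Qed.

(* Site j receives Z from every Majorana of a later site, its own X and Y,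
   and the identity from the earlier sites. *)
Lemma prod_majorana_site S (j : 'I_n) :
  \prod_(k <- enum S) pauli_mx (majorana_site k j) = site_mx (xbit S j) (ybit S j) (zbit S j).
Proof.
rewrite (big_enum_set _ S (fun k => pauli_mx (majorana_site k j))) big_nat_pairs.
have hj := ltn_ord j.
rewrite (@big_cat_nat _ _ _ j) //=; last exact: ltnW.
rewrite [X in _ * X]big_ltn // big_nat_cond big1 ?mul1r; last first.
  move=> j' /andP[/andP[_ hj'] _].
  rewrite /majorana_site !(half_double, half_doubleS) ltnNge (ltnW hj') /= (gtn_eqF hj').
  by case: ifP; case: ifP; rewrite ?pauli_mxI ?mul1r.
rewrite /site_mx /majorana_site !(half_double, half_doubleS) ltnn eqxx odd_double odd_doubleS.
congr (_ * _); rewrite /zbit (big_morph zmx zmxD (erefl (zmx false))).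
rewrite big_nat_cond [in RHS]big_nat_cond; apply: eq_bigr => j' /andP[/andP[hj' _] _].
rewrite /majorana_site !(half_double, half_doubleS) hj' zmxD -/(xbit S j') -/(ybit S j').
by case: (xbit S j'); case: (ybit S j').
Qed.

Lemma majprod_tensmx S : majprod S = tensmx (fun j => site_mx (xbit S j) (ybit S j) (zbit S j)).
Proof. by rewrite majprod_site; apply: eq_tensmx => j; rewrite prod_majorana_site. Qed.

Definition paired S : bool := [forall j : 'I_n, xbit S j == ybit S j].
Definition antipaired S : bool := [forall j : 'I_n, xbit S j != ybit S j].

Lemma pairedP S : reflect (forall j : 'I_n, xbit S j = ybit S j) (paired S).
Proof. by apply: (iffP forallP) => xy j; [move: (xy j) => /eqP | rewrite xy]. Qed.

Lemma antipairedP S : reflect (forall j : 'I_n, xbit S j != ybit S j) (antipaired S).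
Proof. exact: forallP. Qed.

Lemma zbit_paired S : paired S -> forall j, zbit S j = false.
Proof.
move=> /pairedP xy j; rewrite /zbit big_nat_cond big1 // => j' /andP[/andP[_ hj'] _].
by have /= -> := xy (Ordinal hj'); rewrite addbb.
Qed.

Lemma zbit_antipaired S : antipaired S -> forall j, zbit S j = odd (n - j.+1).
Proof.
move=> /antipairedP aS j; rewrite /zbit big_nat_cond (eq_bigr (fun _ => true)); last first.
  by move=> j' /andP[/andP[_ hj'] _]; have := aS (Ordinal hj'); case: xbit; case: ybit.
rewrite -big_nat_cond big_const_nat.
by elim: (n - j.+1)%N => //= k ->.
Qed.

End JordanWigner.

(** * Traces against the GHZ state *)

Lemma prod_cond_const (R : pzSemiRingType) (I : finType) (P : pred I) (c : R) :
  \prod_(i : I) (if P i then c else 1) = c ^+ #|[set i | P i]|.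
Proof. by rewrite -big_mkcond /= -prodr_const; apply: eq_bigl => i; rewrite inE. Qed.

Lemma exp2_gt0 m : (0 < 2 ^ m)%N. Proof. by rewrite expn_gt0. Qed.
Lemma exp2_predlt m : ((2 ^ m).-1 < 2 ^ m)%N. Proof. by rewrite ltn_predL exp2_gt0. Qed.

Lemma odd_pred_exp2_div m e : (e < m)%N -> odd ((2 ^ m).-1 %/ 2 ^ e).
Proof.
move=> lt_em; rewrite -(subnKC (ltnW lt_em)) expnD.
have := exp2_gt0 e; have := exp2_gt0 (m - e); set p := (2 ^ (m - e))%N => p_gt0 q_gt0.
have -> : ((2 ^ e * p).-1 = p.-1 * 2 ^ e + (2 ^ e).-1)%N by nia.
rewrite divnMDl // divn_small ?exp2_predlt // addn0.
have : odd p = false by rewrite /p oddX orbF; apply/negbTE; rewrite -lt0n subn_gt0.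
by rewrite -(prednK p_gt0) oddS => /negbFE.
Qed.

Section GHZ.

Variable n : nat.

Definition idx0 : 'I_(2 ^ n) := Ordinal (exp2_gt0 n).
Definition idx1 : 'I_(2 ^ n) := Ordinal (exp2_predlt n).

Lemma qbit_idx0 j : qbit idx0 j = false.
Proof. by rewrite /qbit /= div0n. Qed.

Lemma qbit_idx1 j : qbit idx1 j = true.
Proof. by apply: odd_pred_exp2_div; case: j => j /= lt_jn; rewrite ltn_subLR; lia. Qed.

Hypothesis n_gt0 : (0 < n)%N.

Lemma idx0_neq1 : (0 != (2 ^ n).-1)%N.
Proof. have : (2 <= 2 ^ n)%N by rewrite -{1}(expn1 2) leq_exp2l. lia. Qed.

Lemma sum_idx01 (F : 'I_(2 ^ n) -> algC) :
  (forall i : 'I_(2 ^ n), (val i != 0%N) -> (val i != (2 ^ n).-1) -> F i = 0) ->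
  \sum_i F i = F idx0 + F idx1.
Proof.
move=> F0; rewrite (bigD1 idx0) //= (bigD1 idx1) /=; last first.
  by rewrite -(inj_eq val_inj) eq_sym idx0_neq1.
rewrite big1 ?addr0 // => i /andP[ne0 ne1].
by apply: F0; [move: ne0 | move: ne1]; rewrite -(inj_eq val_inj).
Qed.

Lemma rhoGHZE k i : rhoGHZ n k i =
  (if (val k == 0%N) || (val k == (2 ^ n).-1) then (sqrtC 2)^-1 else 0) *
  (if (val i == 0%N) || (val i == (2 ^ n).-1) then (sqrtC 2)^-1 else 0).
Proof.
rewrite !mxE big_ord1 !mxE; congr (_ * _); case: ifP; rewrite ?rmorph0 //.
by move=> _; apply: geC0_conj; rewrite invr_ge0 sqrtC_ge0 ler0n.
Qed.

Lemma mxtrace_mul_rhoGHZ (A : 'M[algC]_(2 ^ n)) :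
  \tr (A *m rhoGHZ n) = (A idx0 idx0 + A idx0 idx1 + A idx1 idx0 + A idx1 idx1) / 2.
Proof.
have rho0 k i : (val i != 0%N) -> (val i != (2 ^ n).-1) -> A k i * rhoGHZ n i k = 0.
  by move=> h0 h1; rewrite rhoGHZE (negbTE h0) (negbTE h1) mul0r mulr0.
rewrite /mxtrace sum_idx01; last first.
  move=> i h0 h1; rewrite mxE big1 // => k _.
  by rewrite rhoGHZE (negbTE h0) (negbTE h1) /= !mulr0.
rewrite !mxE !sum_idx01; try by move=> i; apply: rho0.
rewrite !rhoGHZE /= eqxx !orbT -expr2 exprVn sqrtCK.
by ring.
Qed.

Implicit Types S : {set 'I_(2 * n)}.

Definition ghz_trace S : algC := \tr (majprod S *m rhoGHZ n).

Definition corner S (b b' : bool) : algC :=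
  \prod_(j < n) site_mx (xbit S j) (ybit S j) (zbit S j) (obit b) (obit b').

Lemma ghz_traceE S : ghz_trace S =
  (corner S false false + corner S false true + corner S true false + corner S true true) / 2.
Proof.
rewrite /ghz_trace mxtrace_mul_rhoGHZ majprod_tensmx.
by rewrite !(tensmx_bits _ qbit_idx0 qbit_idx0) !(tensmx_bits _ qbit_idx0 qbit_idx1)
  !(tensmx_bits _ qbit_idx1 qbit_idx0) !(tensmx_bits _ qbit_idx1 qbit_idx1).
Qed.

Lemma corner_eq0 S b b' (j : 'I_n) : (b (+) b') != (xbit S j (+) ybit S j) -> corner S b b' = 0.
Proof. by move=> ne; apply/eqP/prodf_eq0; exists j => //; rewrite site_mx_obit_eq0. Qed.

Lemma ghz_trace_paired S : paired S ->
  ghz_trace S = ('i ^+ #|[set j : 'I_n | xbit S j]| + (- 'i) ^+ #|[set j : 'I_n | xbit S j]|) / 2.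
Proof.
move=> pS; move/pairedP: (pS) => xy; have j0 : 'I_n := Ordinal n_gt0.
rewrite ghz_traceE (@corner_eq0 _ false true j0) ?(@corner_eq0 _ true false j0) ?xy ?addbb //.
rewrite !addr0 -!prod_cond_const /corner; congr ((_ + _) / 2); apply: eq_bigr => j _.
all: by rewrite site_mx_obit -xy zbit_paired // addbb; case: xbit; rewrite /bsign /= ?mul1r ?mulr1.
Qed.

Lemma ghz_trace_antipaired S : (4 %| n)%N -> antipaired S ->
  ghz_trace S = ((- 'i) ^+ #|[set j : 'I_n | ybit S j]| + 'i ^+ #|[set j : 'I_n | ybit S j]|) / 2.
Proof.
move=> n4 aS; move/antipairedP: (aS) => xy.
have j0 : 'I_n := Ordinal n_gt0.
have xy0 : (false (+) false) != (xbit S j0 (+) ybit S j0) by case: xbit (xy j0); case: ybit.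
rewrite ghz_traceE (corner_eq0 xy0) (@corner_eq0 _ true true j0) ?addbb // add0r addr0.
rewrite -!prod_cond_const /corner; congr ((_ + _) / 2).
  rewrite (eq_bigr (fun j : 'I_n => (if ybit S j then - 'i else 1) * bsign (odd (n - j.+1)))).
    by rewrite big_split /= prod_tail_sign // mulr1.
  move=> j _; rewrite site_mx_obit zbit_antipaired // andbT; move: (xy j).
  by case: xbit; case: ybit; rewrite /= ?mul1r ?mulr1.
apply: eq_bigr => j _; rewrite site_mx_obit andbF /bsign mulr1; move: (xy j).
by case: xbit; case: ybit; rewrite /= ?mul1r ?mulr1.
Qed.

Lemma ghz_trace_mixed S : ~~ paired S -> ~~ antipaired S -> ghz_trace S = 0.
Proof.
rewrite !negb_forall => /existsP[j1 hj1] /existsP[j2]; rewrite negbK => hj2.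
rewrite ghz_traceE (@corner_eq0 _ false false j1) ?(@corner_eq0 _ true true j1);
  try by move: hj1; case: xbit; case: ybit.
rewrite (@corner_eq0 _ false true j2) ?(@corner_eq0 _ true false j2);
  try by move: hj2; case: xbit; case: ybit.
by rewrite !addr0 mul0r.
Qed.

Lemma ghz_trace_nonherm S : (4 %| n)%N ->
  adjmx (majprod S) != majprod S -> ghz_trace S = 0.
Proof.
move=> n4; have [pS|npS] := boolP (paired S); last first.
  have [aS|naS] := boolP (antipaired S); last by rewrite ghz_trace_mixed.
  rewrite majprod_tensmx (@adjmx_tensmx _ _ (fun j => bsign (odd (n - j.+1)))).
    by rewrite prod_tail_sign // scale1r eqxx.
  move=> j; rewrite adjmx_site_mx /site_sign (zbit_antipaired aS); move/antipairedP: aS => /(_ j).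
  by case: xbit; case: ybit.
move/pairedP: (pS) => xy; rewrite (ghz_trace_paired pS) exprNn; set t := #|_|.
have [t_odd _ | t_even] := boolP (odd t).
  by rewrite -signr_odd t_odd mulN1r addrN mul0r.
rewrite majprod_tensmx (@adjmx_tensmx _ _ (fun j => bsign (xbit S j))).
  by rewrite (prod_cond_const (fun j : 'I_n => xbit S j) (-1 : algC)) -/t -signr_odd (negbTE t_even) scale1r eqxx.
by move=> j; rewrite adjmx_site_mx /site_sign -xy andbb zbit_paired // andbF orbF.
Qed.

Lemma majBasis_trace_sqr S : (4 %| n)%N ->
  (\tr (majBasis S *m rhoGHZ n)) ^+ 2 = ghz_trace S ^+ 2 / (2 ^ n)%:R.
Proof.
move=> n4; rewrite /majBasis -scalemxAl mxtraceZ exprMn exprVn sqrtCK mulrC /hermPart.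
case: ifP => [//|/negbT nonherm].
by rewrite -scalemxAl mxtraceZ -/(ghz_trace S) ghz_trace_nonherm // mulr0 expr0n mul0r.
Qed.

End GHZ.

(** * Counting *)

Section Counting.

Variable n : nat.
Implicit Types (S : {set 'I_(2 * n)}) (T : {set 'I_n}) (f : {ffun 'I_n -> bool}) (j : 'I_n).

Lemma half_lt (k : 'I_(2 * n)) : (k %/ 2 < n)%N.
Proof. by have := ltn_ord k; rewrite ltn_divLR // => h; lia. Qed.
Lemma double_lt j : (2 * j < 2 * n)%N. Proof. by rewrite ltn_pmul2l. Qed.
Lemma doubleS_lt j : ((2 * j).+1 < 2 * n)%N. Proof. by have := ltn_ord j; lia. Qed.

Definition site_of (k : 'I_(2 * n)) : 'I_n := Ordinal (half_lt k).
Definition xord j : 'I_(2 * n) := Ordinal (double_lt j).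
Definition yord j : 'I_(2 * n) := Ordinal (doubleS_lt j).

Lemma xbitE S j : xbit S j = (xord j \in S). Proof. by rewrite -in_valE. Qed.
Lemma ybitE S j : ybit S j = (yord j \in S). Proof. by rewrite -in_valE. Qed.

Lemma site_of_xord j : site_of (xord j) = j. Proof. by apply/val_inj; rewrite /= half_double. Qed.
Lemma site_of_yord j : site_of (yord j) = j. Proof. by apply/val_inj; rewrite /= half_doubleS. Qed.

Lemma ord_site (k : 'I_(2 * n)) : k = if odd k then yord (site_of k) else xord (site_of k).
Proof. by apply/val_inj; case: ifP => ho /=; have := divn_eq k 2; rewrite modn2 ho /=; lia. Qed.

Definition pairedS T : {set 'I_(2 * n)} := [set k : 'I_(2 * n) | site_of k \in T].
Definition antipairedS f : {set 'I_(2 * n)} :=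
  [set k : 'I_(2 * n) | odd k == f (site_of k)].

Lemma xbit_pairedS T j : xbit (pairedS T) j = (j \in T).
Proof. by rewrite xbitE inE site_of_xord. Qed.
Lemma ybit_pairedS T j : ybit (pairedS T) j = (j \in T).
Proof. by rewrite ybitE inE site_of_yord. Qed.
Lemma xbit_antipairedS f j : xbit (antipairedS f) j = ~~ f j.
Proof. by rewrite xbitE inE site_of_xord /= odd_double; case: (f j). Qed.
Lemma ybit_antipairedS f j : ybit (antipairedS f) j = f j.
Proof. by rewrite ybitE inE site_of_yord /= ?odd_doubleS ?odd_double; case: (f j). Qed.

Lemma card_xbit_ybit S : #|S| = (\sum_(j < n) (xbit S j + ybit S j))%N.
Proof.
rewrite -sum1_card big_mkcond /=.
under eq_bigr do rewrite -in_valE.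
rewrite -(big_mkord xpredT (fun k => if in_val S k then 1 else 0)%N) big_nat_pairs big_mkord.
by apply: eq_bigr => j _; rewrite /xbit /ybit; case: in_val; case: in_val.
Qed.

Lemma card_pairedS T : #|pairedS T| = (2 * #|T|)%N.
Proof.
rewrite card_xbit_ybit -sum1_card big_distrr /= [RHS]big_mkcond /=.
by apply: eq_bigr => j _; rewrite xbit_pairedS ybit_pairedS; case: (j \in T).
Qed.

Lemma card_antipairedS f : #|antipairedS f| = n.
Proof.
rewrite card_xbit_ybit (eq_bigr (fun _ => 1%N)) ?sum1_card ?card_ord // => j _.
by rewrite xbit_antipairedS ybit_antipairedS; case: (f j).
Qed.

End Counting.

Lemma half_sign k : ((-1) ^+ k + 1) / 2 = (~~ odd k)%:R :> algC.
Proof. by rewrite -signr_odd; case: odd; rewrite /= ?expr0 ?expr1 ?addNr ?mul0r //; field. Qed.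

Lemma sqr_half_i_exp t : (('i ^+ t + (- 'i) ^+ t) / 2) ^+ 2 = ((-1) ^+ t + 1) / 2 :> algC.
Proof.
rewrite [(- 'i) ^+ t]exprNn.
have : ('i ^+ t) ^+ 2 = (-1) ^+ t :> algC by rewrite -exprM mulnC exprM sqrCi.
rewrite -(signr_odd _ t); set w := 'i ^+ t.
case: odd => /= w2; rewrite ?expr1 ?expr0; first by rewrite mulN1r subrr mul0r expr0n addNr mul0r.
rewrite expr0 in w2; have -> : (w + 1 * w) / 2 = w by field.
by rewrite w2; field.
Qed.

Section Weights.

Variable n : nat.
Implicit Types (S : {set 'I_(2 * n)}) (T : {set 'I_n}) (f : {ffun 'I_n -> bool}).

Lemma sum_half_sign_card a :
  \sum_(T : {set 'I_n} | (2 * #|T| == a)%N) ((-1) ^+ #|T| + 1) / 2 =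
  ((a %% 4 == 0) * 'C(n, a %/ 2))%N%:R :> algC.
Proof.
have [a_odd|a_even] := boolP (odd a).
  rewrite big_pred0 => [|T]; last by apply: contraTF a_odd => /eqP <-; rewrite odd_double.
  suff -> : (a %% 4 == 0)%N = false by [].
  by apply: contraTF a_odd => /eqP a4; rewrite -(odd_mod a (d:=4)) // a4.
have a2 : a = (2 * (a %/ 2))%N by rewrite [LHS](divn_eq a 2) modn2 (negbTE a_even); lia.
rewrite (eq_bigl (fun T : {set 'I_n} => T \in [set T : {set 'I_n} | #|T| == a %/ 2]%N)); last first.
  by move=> T; rewrite inE [in LHS]a2 eqn_pmul2l.
rewrite big_mkcond /= (eq_bigr (fun T : {set 'I_n} => if T \in [set T : {set 'I_n} | #|T| == a %/ 2]%N
  then (~~ odd (a %/ 2))%:R else 0)); last by move=> T _; rewrite inE; case: eqP => // ->; rewrite half_sign.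
rewrite -big_mkcond sumr_const card_draws card_ord -mulrnA.
congr ((nat_of_bool _ * _)%N%:R); rewrite {2}a2 (_ : 4 = 2 * 2)%N // -muln_modr modn2.
by case: odd.
Qed.

Hypothesis n_gt0 : (0 < n)%N.

Lemma sum_sqr_ghz_trace_paired (a : nat) :
  \sum_(S : {set 'I_(2 * n)} | (#|S| == a) && paired S) ghz_trace S ^+ 2 =
  \sum_(T : {set 'I_n} | (2 * #|T| == a)%N) ((-1) ^+ #|T| + 1) / 2.
Proof.
rewrite (reindex_onto (@pairedS n) (fun S => [set j : 'I_n | xbit S j])) /=; last first.
  move=> S /andP[_ /pairedP xy]; apply/setP => k; rewrite !inE [in RHS](ord_site k).
  by case: odd; rewrite -?xbitE -?ybitE ?xy.
have occupied T : [set j : 'I_n | xbit (pairedS T) j] = T.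
  by apply/setP => j; rewrite inE xbit_pairedS.
have paired_pairedS T : paired (pairedS T).
  by apply/pairedP => j; rewrite xbit_pairedS ybit_pairedS.
apply: eq_big => [T|T _]; first by rewrite card_pairedS paired_pairedS occupied eqxx !andbT.
by rewrite ghz_trace_paired // occupied sqr_half_i_exp.
Qed.

Lemma antipaired_npaired S : antipaired S -> ~~ paired S.
Proof.
move=> /antipairedP xy; apply/negP => /pairedP xy'.
by have := xy (Ordinal n_gt0); rewrite xy' eqxx.
Qed.

Lemma sum_sqr_ghz_trace_antipaired (a : nat) : (4 %| n)%N ->
  \sum_(S : {set 'I_(2 * n)} | (#|S| == a) && antipaired S) ghz_trace S ^+ 2 =
  \sum_(f : {ffun 'I_n -> bool} | n == a) ((-1) ^+ #|[set j | f j]| + 1) / 2.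
Proof.
move=> n4; rewrite (reindex_onto (@antipairedS n) (fun S => [ffun j : 'I_n => ybit S j])) /=; last first.
  move=> S /andP[_ /antipairedP xy]; apply/setP => k; rewrite inE ffunE [in RHS](ord_site k).
  by case: odd; rewrite -?xbitE -?ybitE //; move: (xy (site_of k)); case: xbit; case: ybit.
have ybits f : [ffun j : 'I_n => ybit (antipairedS f) j] = f.
  by apply/ffunP => j; rewrite ffunE ybit_antipairedS.
have antipaired_antipairedS f : antipaired (antipairedS f).
  by apply/antipairedP => j; rewrite xbit_antipairedS ybit_antipairedS; case: (f j).
apply: eq_big => [f|f _]; first by rewrite card_antipairedS antipaired_antipairedS ybits eqxx !andbT.
rewrite ghz_trace_antipaired // addrC sqr_half_i_exp.
suff -> : [set j : 'I_n | ybit (antipairedS f) j] = [set j | f j] by [].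
by apply/setP => j; rewrite !inE ybit_antipairedS.
Qed.

Lemma sum_half_sign_ffun :
  \sum_(f : {ffun 'I_n -> bool}) ((-1) ^+ #|[set j | f j]| + 1) / 2 = (2 ^ (n - 1))%:R :> algC.
Proof.
rewrite -mulr_suml big_split /=.
have -> : \sum_(f : {ffun 'I_n -> bool}) (-1) ^+ #|[set j | f j]| = 0 :> algC.
  under eq_bigr do rewrite -(prod_cond_const (fun j : 'I_n => _ j) (-1 : algC)).
  rewrite -(bigA_distr_bigA (fun (j : 'I_n) (b : bool) => if b then -1 else 1 : algC)).
  by apply/eqP/prodf_eq0; exists (Ordinal n_gt0) => //; rewrite big_bool /= addNr.
rewrite add0r sumr_const card_ffun card_bool card_ord.
by rewrite -[in (2 ^ n)%N](subnK n_gt0) addn1 expnS natrM; field.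
Qed.

Lemma Pweight_rhoGHZ a : (4 %| n)%N -> Pweight a (rhoGHZ n) =
  ((a %% 4 == 0) * 'C(n, a %/ 2) + (a == n) * 2 ^ (n - 1))%N%:R / (2 ^ n)%:R.
Proof.
move=> n4; rewrite /Pweight; under eq_bigr do rewrite majBasis_trace_sqr //.
rewrite -mulr_suml (bigID (@paired n)) /=; congr (_ / _).
rewrite (bigID (@antipaired n) (fun S => (#|S| == a) && ~~ paired S)) /=.
rewrite [X in _ + (_ + X)]big1 => [|S /andP[/andP[_ nP] nA]]; last by rewrite ghz_trace_mixed ?expr0n.
have antipaired_only S : (#|S| == a) && ~~ paired S && antipaired S = (#|S| == a) && antipaired S.
  by case/boolP: (antipaired S) => [/antipaired_npaired ->|]; rewrite ?andbF ?andbT.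
rewrite addr0 (eq_bigl _ _ antipaired_only).
rewrite sum_sqr_ghz_trace_paired sum_half_sign_card sum_sqr_ghz_trace_antipaired // natrD.
by congr (_ + _); have [_|_] := eqVneq n a; rewrite ?sum_half_sign_ffun ?mul1n ?big_pred0.
Qed.

End Weights.

Unset Implicit Arguments.

Theorem mainTheorem9 (n : nat) (hn : (0 < n)%N) (h4 : (4 %| n)%N)
    (alpha : nat) (halpha : (alpha <= 2 * n)%N) :
  ((ssrnat.odd alpha || (alpha %% 4 == 2)%N) -> Pweight alpha (rhoGHZ n) = 0) /\
  ((alpha %% 4 == 0)%N -> alpha != n ->
     Pweight alpha (rhoGHZ n) = ('C(n, alpha %/ 2))%:R / (2 ^ n)%:R) /\
  (Pweight n (rhoGHZ n) = (2 ^ (n - 1) + 'C(n, n %/ 2))%:R / (2 ^ n)%:R).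
Proof.
have n4 : (n %% 4 == 0)%N := h4.
rewrite !Pweight_rhoGHZ // eqxx n4; split; [|split].
- move=> alpha_bad; have a4 : (alpha %% 4 != 0)%N.
    move: alpha_bad (ltn_mod alpha 4); rewrite -(odd_mod alpha (d:=4)) //.
    by case: (alpha %% 4)%N => [|[|[|[|r]]]].
  have /negbTE-> : alpha != n by apply: contraNneq a4 => ->.
  by rewrite (negbTE a4) !mul0n mul0r.
- by move=> a4 /negbTE ne; rewrite a4 ne mul1n addn0.
- by rewrite !mul1n addnC.
Qed.
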